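(* For every integer $d\ge3$, the set $\mathfrak P_d$ is contained in $[0,2d-4]^{2d-4}\times[-d+2,d-2]$; hence $\mathfrak P_d$ is a bounded convex polytope and $\mathfrak P_d\cap\mathbb Z^{2d-3}$ is finite.
   Context: $\mathfrak P_d\subseteq\mathbb R^{2d-3}$ is the set of all $(x_1,\dots,x_{d-2},y_1,\dots,y_{d-2},z)\in\mathbb R^{2d-3}$ satisfying: $x_j-x_{j+1}\ge0$ and $y_j-y_{j+1}\ge0$ for $j\in\{1,\dots,d-3\}$; $x_j\ge0$, $y_j\ge0$ for $j\in\{1,\dots,d-2\}$; $j(z+d-1-j)+\sum_{i=0}^{j-2}x_{d-2-i}-\sum_{i=1}^{j}y_i\ge0$ for $j\in\{1,\dots,d-2\}$; and $\sum_{i=1}^{d-2}y_i-\sum_{i=1}^{d-2}x_i=z(d-1)$. *)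

From HB Require Import structures.
From mathcomp Require Import all_boot all_order all_algebra.
Set Implicit Arguments. Unset Strict Implicit. Unset Printing Implicit Defensive.
Import Order.TTheory GRing.Theory Num.Theory.
Local Open Scope ring_scope.

(* Points of R^(2d-3) are row vectors 'rV[R]_(2d-3), coordinates numbered
   0 .. 2d-4 (0-based).  Layout: (x_1..x_{d-2}, y_1..y_{d-2}, z). *)
Definition dimP (d : nat) : nat := (2 * d - 3)%N.

(* k-th coordinate (0-based) of p, 0 if out of range *)
Definition coordp (R : pzRingType) (n : nat) (p : 'rV[R]_n) (k : nat) : R :=
  match @insub nat (fun k => k < n)%N 'I_n k with
  | Some i => p ord0 i
  | None => 0
  end.

Definition xc (R : pzRingType) (d : nat) (p : 'rV[R]_(dimP d)) (j : nat) : R :=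
  coordp p (j - 1)%N.
Definition yc (R : pzRingType) (d : nat) (p : 'rV[R]_(dimP d)) (j : nat) : R :=
  coordp p (d - 2 + (j - 1))%N.
Definition zc (R : pzRingType) (d : nat) (p : 'rV[R]_(dimP d)) : R :=
  coordp p (2 * d - 4)%N.

Definition inPd (R : realFieldType) (d : nat) (p : 'rV[R]_(dimP d)) : Prop :=
  [/\ (forall j, (1 <= j <= d - 3)%N -> 0 <= xc p j - xc p j.+1),
      (forall j, (1 <= j <= d - 3)%N -> 0 <= yc p j - yc p j.+1),
      (forall j, (1 <= j <= d - 2)%N -> 0 <= xc p j /\ 0 <= yc p j),
      (forall j, (1 <= j <= d - 2)%N ->
         0 <= j%:R * (zc p + d%:R - 1 - j%:R)
              + \sum_(0 <= i < j - 1) xc p (d - 2 - i)%N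
              - \sum_(1 <= i < j.+1) yc p i) &
      \sum_(1 <= i < d - 1) yc p i - \sum_(1 <= i < d - 1) xc p i
        = zc p * (d%:R - 1)].

Definition inBox (R : realFieldType) (d : nat) (p : 'rV[R]_(dimP d)) : Prop :=
  (forall k, (k < 2 * d - 4)%N ->
      0 <= coordp p k <= 2%:R * d%:R - 4%:R) /\
  - (d%:R - 2%:R) <= zc p <= d%:R - 2%:R.

Definition is_int_point (R : realFieldType) (n : nat) (p : 'rV[R]_n) : Prop :=
  forall i : 'I_n, exists m : int, p ord0 i = m%:~R.

From HB Require Import structures.
From mathcomp Require Import all_boot all_order all_algebra.
From mathcomp Require Import ring lra zify.
Set Implicit Arguments. Unset Strict Implicit. Unset Printing Implicit Defensive.
Import Order.TTheory GRing.Theory Num.Theory.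
Local Open Scope ring_scope.

(* Since x and y are nonincreasing and nonnegative, everything hinges on
   bounding x_1, y_1 and z.  The inequality for j = 1 reads
   y_1 <= z + d - 2; the one for j = d - 2, after eliminating the sums of
   y and x with the equation, reads x_1 <= d - 2 - z.  Nonnegativity of
   x_1 and y_1 then gives |z| <= d - 2 and x_1, y_1 <= 2d - 4.  Every
   constraint is affine in the point, whence convexity; integer points of
   a bounded set are finitely many. *)

Lemma sum_nat_rev_shift (V : nmodType) (F : nat -> V) m :
  \sum_(0 <= i < m - 1) F (m - i)%N = \sum_(2 <= i < m.+1) F i.
Proof.
rewrite big_nat_rev -[2%N]add0n big_addn subSS.
by apply: eq_big_nat => i /andP[_ lt_im]; congr F; lia.
Qed.

Lemma nonincn_le_first (R : numDomainType) (f : nat -> R) m :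
  (forall j, (1 <= j <= m)%N -> 0 <= f j - f j.+1) ->
  forall i, (1 <= i <= m.+1)%N -> f i <= f 1%N.
Proof.
move=> f_noninc; elim=> // -[_ //|i] IH i_in.
apply: le_trans (IH _); last by lia.
by rewrite -subr_ge0 f_noninc //; lia.
Qed.

Lemma coordp_ord (R : pzRingType) n (p : 'rV[R]_n) (i : 'I_n) :
  coordp p i = p ord0 i.
Proof. by rewrite /coordp valK. Qed.

Section PolytopeBounds.

Variables (R : realFieldType) (d : nat) (p : 'rV[R]_(dimP d)).
Hypotheses (d_ge3 : (3 <= d)%N) (p_in : inPd p).

Lemma inPd_xc_le_xc1 j : (1 <= j <= d - 2)%N -> xc p j <= xc p 1.
Proof.
case: p_in => x_noninc _ _ _ _; rewrite (_ : (d - 2 = (d - 3).+1)%N); last by lia.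
exact: nonincn_le_first.
Qed.

Lemma inPd_yc_le_yc1 j : (1 <= j <= d - 2)%N -> yc p j <= yc p 1.
Proof.
case: p_in => _ y_noninc _ _ _; rewrite (_ : (d - 2 = (d - 3).+1)%N); last by lia.
exact: nonincn_le_first.
Qed.

Lemma inPd_yc1_le : yc p 1 <= zc p + d%:R - 2.
Proof.
case: p_in => _ _ _ constraint _.
have /constraint : (1 <= 1 <= d - 2)%N by lia.
rewrite big_geq // big_nat1; lra.
Qed.

Lemma inPd_xc1_le : xc p 1 <= d%:R - 2 - zc p.
Proof.
case: p_in => _ _ _ constraint sum_eq.
have /constraint : (1 <= d - 2 <= d - 2)%N by lia.
rewrite sum_nat_rev_shift natrB ?subnSK; [|lia..].
by move: sum_eq; rewrite [\sum_(1 <= i < _) xc p i]big_ltn; [lra | lia].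
Qed.

Lemma inPd_coord_ge0 j : (1 <= j <= d - 2)%N -> 0 <= xc p j /\ 0 <= yc p j.
Proof. by case: p_in => _ _ nonneg _ _; apply: nonneg. Qed.

Lemma inPd_zc_bounds : - (d%:R - 2) <= zc p <= d%:R - 2.
Proof.
have [x1_ge0 y1_ge0] : 0 <= xc p 1 /\ 0 <= yc p 1 by apply: inPd_coord_ge0; lia.
have := inPd_xc1_le; have := inPd_yc1_le; lra.
Qed.

Lemma inPd_coordp_bounds k :
  (k < 2 * d - 4)%N -> 0 <= coordp p k <= 2 * d%:R - 4.
Proof.
move=> k_lt; have := inPd_zc_bounds; have := inPd_xc1_le; have := inPd_yc1_le.
have [k_lt_d2 | k_ge_d2] := ltnP k (d - 2).
  have -> : coordp p k = xc p k.+1 by rewrite /xc subn1.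
  have j_in : (1 <= k.+1 <= d - 2)%N by lia.
  have := inPd_xc_le_xc1 j_in; have [+ _] := inPd_coord_ge0 j_in; lra.
have -> : coordp p k = yc p (k - (d - 2)).+1.
  by rewrite /yc subn1 /= subnKC.
have j_in : (1 <= (k - (d - 2)).+1 <= d - 2)%N by lia.
have := inPd_yc_le_yc1 j_in; have [_ +] := inPd_coord_ge0 j_in; lra.
Qed.

Lemma inPd_inBox : inBox p.
Proof. by split; [exact: inPd_coordp_bounds | exact: inPd_zc_bounds]. Qed.

End PolytopeBounds.

Section AffineFunctions.

Variables (R : numDomainType) (n : nat).

Definition affine (f : 'rV[R]_n -> R) :=
  forall p q t, f (t *: p + (1 - t) *: q) = t * f p + (1 - t) * f q.

Lemma affine_coordp k : affine (fun p => coordp p k).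
Proof.
move=> p q t; rewrite /coordp; case: insubP => [i _ _|_]; rewrite ?mxE //.
by rewrite !mulr0 addr0.
Qed.

Lemma affine_cst c : affine (fun=> c).
Proof. by move=> p q t; ring. Qed.

Lemma affineD f g : affine f -> affine g -> affine (fun p => f p + g p).
Proof. by move=> af ag p q t; rewrite af ag; ring. Qed.

Lemma affineN f : affine f -> affine (fun p => - f p).
Proof. by move=> af p q t; rewrite af; ring. Qed.

Lemma affineMl c f : affine f -> affine (fun p => c * f p).
Proof. by move=> af p q t; rewrite af; ring. Qed.

Lemma affineMr c f : affine f -> affine (fun p => f p * c).
Proof. by move=> af p q t; rewrite af; ring. Qed.

Lemma affine_sum a b (F : nat -> 'rV[R]_n -> R) :
  (forall i, affine (F i)) -> affine (fun p => \sum_(a <= i < b) F i p).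
Proof.
move=> aF p q t; under eq_bigr do rewrite aF.
by rewrite big_split /= -!mulr_sumr.
Qed.

Lemma affine_ge0 f p q t : affine f -> 0 <= t <= 1 ->
  0 <= f p -> 0 <= f q -> 0 <= f (t *: p + (1 - t) *: q).
Proof.
move=> af /andP[t_ge0 t_le1] fp_ge0 fq_ge0; rewrite af.
by rewrite addr_ge0 ?mulr_ge0 ?subr_ge0.
Qed.

Lemma affine_eq f g p q t : affine f -> affine g ->
  f p = g p -> f q = g q -> f (t *: p + (1 - t) *: q) = g (t *: p + (1 - t) *: q).
Proof. by move=> af ag fgp fgq; rewrite af ag fgp fgq. Qed.

End AffineFunctions.

Ltac prove_affine :=
  repeat first [ apply: affine_cst | apply: affine_coordp | apply: affineD
               | apply: affineN | apply: affineMl | apply: affineMr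
               | apply: affine_sum => ? ].

Lemma inPd_convex (R : realFieldType) d (p q : 'rV[R]_(dimP d)) t :
  inPd p -> inPd q -> 0 <= t <= 1 -> inPd (t *: p + (1 - t) *: q).
Proof.
move=> [P1 P2 P3 P4 P5] [Q1 Q2 Q3 Q4 Q5] t01.
have ge0 (f : 'rV[R]_(dimP d) -> R) :
    affine f -> 0 <= f p -> 0 <= f q -> 0 <= f (t *: p + (1 - t) *: q).
  by move=> af; apply: affine_ge0.
split.
- move=> j j_in; apply: (ge0 (fun r => xc r j - xc r j.+1) _ (P1 j j_in) (Q1 j j_in)).
  prove_affine.
- move=> j j_in; apply: (ge0 (fun r => yc r j - yc r j.+1) _ (P2 j j_in) (Q2 j j_in)).
  prove_affine.
- move=> j j_in; have [xp yp] := P3 j j_in; have [xq yq] := Q3 j j_in.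
  split; [apply: (ge0 (fun r => xc r j) _ xp xq) | apply: (ge0 (fun r => yc r j) _ yp yq)].
  all: prove_affine.
- move=> j j_in; apply: (ge0 (fun r => j%:R * (zc r + d%:R - 1 - j%:R)
      + \sum_(0 <= i < j - 1) xc r (d - 2 - i)%N - \sum_(1 <= i < j.+1) yc r i)
      _ (P4 j j_in) (Q4 j j_in)).
  prove_affine.
- apply: (affine_eq
    (f := fun r => \sum_(1 <= i < d - 1) yc r i - \sum_(1 <= i < d - 1) xc r i)
    (g := fun r => zc r * (d%:R - 1))) => //.
  all: prove_affine.
Qed.

Lemma int_points_in_cube (R : realFieldType) n (B : nat) :
  exists s : seq 'rV[R]_n, forall p : 'rV[R]_n,
    is_int_point p -> (forall i, `|p ord0 i| <= B%:R) -> p \in s.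
Proof.
exists [seq \row_i ((f i : nat)%:R - B%:R) | f : {ffun 'I_n -> 'I_(B + B).+1}].
move=> p p_int p_bounded; have [m pE] := fin_all_exists p_int.
have m_bounded i : (`|m i| <= B)%R.
  by have := p_bounded i; rewrite pE -intr_norm -[B%:R]/((B%:Z)%:~R : R) ler_int.
apply/mapP; exists [ffun i => inord (absz (m i + B%:Z))]; first by rewrite mem_enum.
apply/rowP => i; rewrite !mxE ffunE inordK.
  by rewrite natr_absz ger0_norm ?intrD ?pE ?addrK //; have := m_bounded i; lia.
by have := m_bounded i; lia.
Qed.

Lemma inBox_norm_le (R : realFieldType) d (p : 'rV[R]_(dimP d)) :
  (2 <= d)%N -> inBox p -> forall i, `|p ord0 i| <= (2 * d - 4)%:R.
Proof.
move=> d_ge2 [coord_bounds z_bounds] i; rewrite natrB ?natrM; last by lia.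
rewrite -coordp_ord.
have [i_lt | i_ge] := ltnP i (2 * d - 4).
  by have := coord_bounds i i_lt; rewrite ler_norml; lra.
have -> : nat_of_ord i = (2 * d - 4)%N.
  by move: i_ge (ltn_ord i); rewrite /dimP; case: i => /= k _; lia.
have d2 : (2 <= d%:R :> R) by rewrite (ler_nat R 2 d).
by rewrite -/(zc p) ler_norml; lra.
Qed.

Theorem corollary5p15 (R : realFieldType) (d : nat) (hd : (3 <= d)%N) :
  (forall p : 'rV[R]_(dimP d), inPd p -> inBox p) /\
  (forall (p q : 'rV[R]_(dimP d)) (t : R), inPd p -> inPd q ->
     0 <= t <= 1 -> inPd (t *: p + (1 - t) *: q)) /\
  (exists s : seq 'rV[R]_(dimP d),
     forall p : 'rV[R]_(dimP d), inPd p -> is_int_point p -> p \in s).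
Proof.
split; first by move=> p; apply: inPd_inBox.
split; first exact: inPd_convex.
have [s s_cube] := int_points_in_cube R (dimP d) (2 * d - 4).
exists s => p p_in p_int; apply: s_cube p_int _.
by apply: inBox_norm_le (inPd_inBox hd p_in); lia.
Qed.
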